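(* Let $H$ be a Hopf algebra and $K$ a locally affine Hopf subalgebra of $H$. If $H$ is generated as an algebra by $K$ and a single element $x\in H$, then $H$ is locally affine.
   Context: A Hopf algebra is locally affine if every finite subset of it is contained in a Hopf subalgebra that is finitely generated as an algebra. The base field $k$ is algebraically closed of characteristic zero. *)

(* Hopf algebras over a field k, encoded without a tensor
   product library: an element of H (x) H (resp. H (x) H (x) H) is represented
   by a finite list of pairs (triples) of pure tensors, and two such lists
   denote the same tensor iff every functional f (x) g (resp. f (x) g (x) h),
   with f g h linear forms on H, takes the same value on them. *)
From HB Require Import structures.
From mathcomp Require Import all_boot all_order all_algebra.
Set Implicit Arguments. Unset Strict Implicit. Unset Printing Implicit Defensive.
Import GRing.Theory.
Local Open Scope ring_scope.

Section Hopf.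
Variables (k : fieldType) (H : algType k).

Definition lin_form (f : H -> k) : Prop :=
  forall (a : k) (x y : H), f (a *: x + y) = a * f x + f y.

Definition tev2 (f g : H -> k) (t : seq (H * H)) : k :=
  \sum_(p <- t) f p.1 * g p.2.
Definition tev3 (f g h : H -> k) (t : seq (H * H * H)) : k :=
  \sum_(p <- t) f p.1.1 * g p.1.2 * h p.2.

Definition teq2 (s t : seq (H * H)) : Prop :=
  forall f g, lin_form f -> lin_form g -> tev2 f g s = tev2 f g t.
Definition teq3 (s t : seq (H * H * H)) : Prop :=
  forall f g h, lin_form f -> lin_form g -> lin_form h ->
    tev3 f g h s = tev3 f g h t.

Record hopf_structure := HopfStructure {
  Delta : H -> seq (H * H);
  eps : H -> k;
  antipode : H -> H;
  Delta_lin : forall (a : k) (x y : H),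
    teq2 (Delta (a *: x + y)) ([seq (a *: p.1, p.2) | p <- Delta x] ++ Delta y);
  Delta_mul : forall x y : H,
    teq2 (Delta (x * y)) [seq (p.1 * q.1, p.2 * q.2) | p <- Delta x, q <- Delta y];
  Delta_one : teq2 (Delta 1) [:: (1, 1)];
  Delta_coassoc : forall h : H,
    teq3 [seq (q.1, q.2, p.2) | p <- Delta h, q <- Delta p.1]
         [seq (p.1, q.1, q.2) | p <- Delta h, q <- Delta p.2];
  eps_lin : lin_form eps;
  eps_mul : forall x y : H, eps (x * y) = eps x * eps y;
  eps_one : eps 1 = 1;
  counit_l : forall h : H, \sum_(p <- Delta h) eps p.1 *: p.2 = h;
  counit_r : forall h : H, \sum_(p <- Delta h) eps p.2 *: p.1 = h;
  antipode_lin : forall (a : k) (x y : H),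
    antipode (a *: x + y) = a *: antipode x + antipode y;
  antipode_l : forall h : H,
    \sum_(p <- Delta h) antipode p.1 * p.2 = eps h *: 1;
  antipode_r : forall h : H,
    \sum_(p <- Delta h) p.1 * antipode p.2 = eps h *: 1
}.

Definition is_subalgebra (K : H -> Prop) : Prop :=
  [/\ K 1,
      forall x y, K x -> K y -> K (x + y),
      forall (a : k) x, K x -> K (a *: x)
    & forall x y, K x -> K y -> K (x * y)].

Definition gen_alg (P : H -> Prop) : H -> Prop :=
  fun h => forall Q, is_subalgebra Q -> (forall y, P y -> Q y) -> Q h.

Definition fin_gen (K : H -> Prop) : Prop :=
  exists g : seq H, forall h, K h <-> gen_alg (fun y => y \in g) h.

Definition hopf_subalgebra (HS : hopf_structure) (K : H -> Prop) : Prop :=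
  [/\ is_subalgebra K,
      forall h, K h -> exists t : seq (H * H),
        (forall p, p \in t -> K p.1 /\ K p.2) /\ teq2 (Delta HS h) t
    & forall h, K h -> K (antipode HS h)].

Definition locally_affine (HS : hopf_structure) (K : H -> Prop) : Prop :=
  forall s : seq H, (forall x, x \in s -> K x) ->
    exists L : H -> Prop,
      [/\ hopf_subalgebra HS L, (forall x, L x -> K x),
          (forall x, x \in s -> L x) & fin_gen L].

End Hopf.

(* Pick finitely many elements g of K such that the given finite set, S x and
   the tensor factors of Delta x all lie in the subalgebra generated by g and x,
   and then a finitely generated Hopf subalgebra L' of K containing g.  The
   subalgebra L generated by L' and x is finitely generated, and it is a Hopf
   subalgebra: its generators have coproducts in L (x) L and antipodes in L,
   and both properties pass to sums and products because Delta is
   multiplicative and S is an algebra antihomomorphism.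
   Tensors are encoded by their values on products of linear forms, so the
   convolution proof that S is antimultiplicative first needs that linear
   forms separate points (Zorn's lemma): this lets encoded tensors be
   evaluated by arbitrary multilinear maps. *)
From HB Require Import structures.
From mathcomp Require Import all_boot all_order all_algebra.
From mathcomp Require Import boolp classical_sets.
Set Implicit Arguments. Unset Strict Implicit. Unset Printing Implicit Defensive.
Import GRing.Theory.
Local Open Scope ring_scope.
Local Open Scope classical_set_scope.

Section LinearMaps.
Variables (R : pzRingType) (U W : lmodType R) (F : U -> W).
Hypothesis linF : linear F.

Lemma linB x y : F (x - y) = F x - F y.
Proof. exact: (@zmod_morphism_linear _ _ _ *:%R F linF). Qed.

Lemma linZ a x : F (a *: x) = a *: F x.
Proof. exact: (@scalable_linear _ _ _ *:%R F linF). Qed.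

Lemma linD x y : F (x + y) = F x + F y.
Proof. by have := linF 1 x y; rewrite !scale1r. Qed.

Lemma lin0 : F 0 = 0.
Proof. by rewrite -(subrr 0) linB subrr. Qed.

Lemma linN x : F (- x) = - F x.
Proof. by rewrite -sub0r linB lin0 sub0r. Qed.

Lemma lin_sum (I : Type) (r : seq I) (G : I -> U) :
  F (\sum_(i <- r) G i) = \sum_(i <- r) F (G i).
Proof.
by elim: r => [|i r IH]; rewrite ?big_nil ?lin0 // !big_cons linD IH.
Qed.

End LinearMaps.

Lemma linear_comp (R : pzRingType) (U V W : lmodType R) (F : V -> W) (G : U -> V) :
  linear F -> linear G -> linear (fun x => F (G x)).
Proof. by move=> linF linG a x y; rewrite linG linF. Qed.

Lemma linear_sum_fun (R : pzRingType) (U W : lmodType R) (I : Type) (r : seq I)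
    (F : I -> U -> W) :
  (forall i, linear (F i)) -> linear (fun x => \sum_(i <- r) F i x).
Proof.
move=> linF a x y; elim: r => [|i r IH]; first by rewrite !big_nil scaler0 addr0.
by rewrite !big_cons IH linF scalerDr addrACA.
Qed.

Lemma scalar_linear (R : pzRingType) (U : lmodType R) (f : U -> R) :
  scalar f -> linear (f : U -> R^o).
Proof. by []. Qed.

Section Separation.
Variables (k : fieldType) (V : lmodType k).

(* Graphs of k-linear forms defined on a subspace of V and sending v to 1.
   The condition on v is only imposed on nonempty graphs so that the union
   of the empty chain qualifies in Zorn's lemma. *)
Definition partial_form (v : V) (R : set (V * k)) : Prop :=
  [/\ forall p q, R p -> R q -> R (p.1 + q.1, p.2 + q.2),
      forall a p, R p -> R (a *: p.1, a * p.2),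
      forall w c1 c2, R (w, c1) -> R (w, c2) -> c1 = c2
    & (exists p, R p) -> R (v, 1)].

Lemma partial_form_chain (v : V) (F : set (set (V * k))) :
  F `<=` partial_form v -> total_on F subset ->
  partial_form v (\bigcup_(X in F) X).
Proof.
move=> pfF Ftot.
have common X Y : F X -> F Y -> exists2 Z, F Z & X `<=` Z /\ Y `<=` Z.
  move=> FX FY; have [XY|YX] := Ftot X Y FX FY.
  - by exists Y => //; split=> // z.
  - by exists X => //; split=> // z.
split.
- move=> p q [X FX Xp] [Y FY Yq]; have [Z FZ [XZ YZ]] := common X Y FX FY.
  by exists Z => //; have [+ _ _ _] := pfF Z FZ; apply; [apply: XZ|apply: YZ].
- move=> a p [X FX Xp]; exists X => //.
  by have [_ + _ _] := pfF X FX; apply.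
- move=> w c1 c2 [X FX Xp] [Y FY Yq]; have [Z FZ [XZ YZ]] := common X Y FX FY.
  by have [_ _ Zfun _] := pfF Z FZ; exact: Zfun (XZ _ Xp) (YZ _ Yq).
- move=> [p [X FX Xp]]; exists X => //.
  by have [_ _ _ +] := pfF X FX; apply; exists p.
Qed.

Lemma line_partial_form (v : V) :
  v != 0 -> partial_form v [set p | exists a, p = (a *: v, a)].
Proof.
move=> v0; split.
- by move=> _ _ [a ->] [b ->]; exists (a + b); rewrite /= scalerDl.
- by move=> c _ [a ->]; exists (c * a); rewrite /= scalerA.
- move=> w c1 c2 [a [-> ->]] [b [Eb ->]]; apply/eqP; rewrite -subr_eq0.
  have : (a - b) *: v == 0 by rewrite scalerBl Eb subrr.
  by rewrite scaler_eq0 (negbTE v0) orbF.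
- by move=> _; exists 1; rewrite scale1r.
Qed.

Definition extend_graph (R : set (V * k)) (h : V) : set (V * k) :=
  [set p | exists w c a, R (w, c) /\ p = (w + a *: h, c)].

Lemma extend_partial_form (v h : V) (R : set (V * k)) :
  partial_form v R -> R (v, 1) -> (forall c, ~ R (h, c)) ->
  partial_form v (extend_graph R h).
Proof.
move=> [Radd Rscale Rfun _] Rv Rh; split.
- move=> _ _ [w1 [c1 [a1 [R1 ->]]]] [w2 [c2 [a2 [R2 ->]]]].
  exists (w1 + w2), (c1 + c2), (a1 + a2); split; first exact: Radd R1 R2.
  by rewrite /= scalerDl addrACA.
- move=> b _ [w [c [a [Rwc ->]]]]; exists (b *: w), (b * c), (b * a).
  by split; [exact: Rscale b _ Rwc | rewrite /= scalerDr scalerA].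
- move=> w c1 c2 [w1 [d1 [a1 [R1 [E1 ->]]]]] [w2 [d2 [a2 [R2 [E2 ->]]]]].
  have [a12|a12] := eqVneq a1 a2.
    subst a2; move: R2; rewrite -(addIr _ (etrans (esym E1) E2)).
    exact: Rfun.
  (* otherwise h = (a1 - a2)^-1 *: (w2 - w1) would already lie in the domain *)
  have Rd : R (w2 - w1, d2 - d1).
    by have := Radd _ _ R2 (Rscale (-1) _ R1); rewrite /= scaleN1r mulN1r.
  have Eh : (a1 - a2) *: h = w2 - w1.
    by rewrite scalerBl; apply/eqP; rewrite subr_eq addrAC -E2 E1 addrAC subrr add0r.
  have a12' : a1 - a2 != 0 by rewrite subr_eq0.
  case: (Rh ((a1 - a2)^-1 * (d2 - d1))).
  by have := Rscale (a1 - a2)^-1 _ Rd; rewrite /= -Eh scalerA mulVf // scale1r.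
- by move=> _; exists v, 1, 0; rewrite scale0r addr0.
Qed.

Lemma linear_form_neq0 (v : V) : v != 0 -> exists f : V -> k, scalar f /\ f v != 0.
Proof.
move=> v0.
have [A [Apf Amax]] := Zorn_bigcup (@partial_form_chain v).
have [Aadd Ascale Afun Av] := Apf.
have [p Ap] : exists p, A p.
  apply: contrapT => Aempty; apply: (Amax _ _ (line_partial_form v0)); split.
    by move=> p Ap; case: Aempty; exists p.
  move=> /(_ (v, 1)) Av1; case: Aempty; exists (v, 1).
  by apply: Av1; exists 1; rewrite scale1r.
have Av1 := Av (ex_intro _ p Ap).
have A0 : A (0, 0) by have := Ascale 0 _ Av1; rewrite /= scale0r mul0r.
have Adom h : exists c, A (h, c).
  apply: contrapT => Ah.
  have Ah' c : ~ A (h, c) by move=> Ahc; apply: Ah; exists c.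
  apply: (Amax _ _ (extend_partial_form Apf Av1 Ah')).
  split; first by move=> [w c] Awc; exists w, c, 0; rewrite scale0r addr0.
  move=> /(_ (h, 0)) Ah0; apply: (Ah' 0); apply: Ah0.
  by exists 0, 0, 1; rewrite add0r scale1r.
pose f h := projT1 (cid (Adom h)).
have Af h : A (h, f h) by rewrite /f; case: cid.
exists f; split; last by rewrite (Afun _ _ _ (Af v) Av1) oner_neq0.
move=> a x y; apply: (Afun (a *: x + y)); first exact: Af.
exact: Aadd _ _ (Ascale a _ (Af x)) (Af y).
Qed.

Lemma eq_by_linear_forms (w1 w2 : V) :
  (forall f : V -> k, scalar f -> f w1 = f w2) -> w1 = w2.
Proof.
move=> fw; apply/eqP; rewrite -subr_eq0; apply/negPn/negP.
move=> /linear_form_neq0 [f [linf]]; rewrite (linB (scalar_linear linf)) fw //.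
by rewrite subrr eqxx.
Qed.

Section TensorSums.
Variables (T : Type) (W : lmodType k).
Implicit Types (d : seq (V * T)) (b : V -> T -> W).

Definition pivot (f : V -> k) (a0 : V) d : seq (V * T) :=
  [seq (p.1 - (f p.1 / f a0) *: a0, p.2) | p <- d].

Lemma sum_pivot (f : V -> k) a0 t0 d b : (forall t, linear (b^~ t)) ->
  f a0 != 0 ->
  \sum_(p <- (a0, t0) :: d) b p.1 p.2 = \sum_(p <- pivot f a0 d) b p.1 p.2
    + (f a0)^-1 *: \sum_(p <- (a0, t0) :: d) f p.1 *: b a0 p.2.
Proof.
move=> linb fa0; rewrite scaler_sumr !big_cons /= scalerA mulVf // scale1r.
rewrite addrCA; congr (_ + _); rewrite big_map -big_split /=.
by apply: eq_bigr => p _; rewrite (linB (linb _)) (linZ (linb _)) scalerA mulrC subrK.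
Qed.

(* Induction on the length of d: a nonzero first factor a0 is eliminated from
   the other terms by means of a form f such that f a0 != 0. *)
Lemma tensor_sum_eq0 (G : (T -> W) -> Prop) d :
  (forall f, scalar f -> forall g, G g -> \sum_(p <- d) f p.1 *: g p.2 = 0) ->
  forall b, (forall t, linear (b^~ t)) -> (forall a, G (b a)) ->
  \sum_(p <- d) b p.1 p.2 = 0.
Proof.
move=> + b linb Gb; have [n] := ubnP (size d).
elim: n d => // n IH [|[a0 t0] d] sd hd; first by rewrite big_nil.
have [a00|a00] := eqVneq a0 0.
  rewrite {}a00 in hd *; rewrite big_cons (lin0 (linb _)) add0r; apply: IH => // f linf g Gg.
  by have := hd f linf g Gg; rewrite big_cons /= (lin0 (scalar_linear linf)) scale0r add0r.
have [f [linf fa0]] := linear_form_neq0 a00.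
rewrite (sum_pivot _ _ linb fa0) hd // scaler0 addr0.
apply: IH => [|f' linf' g Gg]; first by rewrite size_map.
have linfg t : linear ((fun a => f' a *: g t : W)).
  by move=> c x y; rewrite linf' scalerDl scalerA.
have := sum_pivot t0 d linfg fa0; rewrite hd //.
under [X in _ + _ *: X]eq_bigr do rewrite scalerA mulrC -scalerA.
by rewrite -scaler_sumr hd // !scaler0 addr0 => <-.
Qed.

Lemma tensor_sum_eq (G : (T -> W) -> Prop) (s t : seq (V * T)) :
  (forall f, scalar f -> forall g, G g ->
     \sum_(p <- s) f p.1 *: g p.2 = \sum_(p <- t) f p.1 *: g p.2) ->
  forall b, (forall t, linear (b^~ t)) -> (forall a, G (b a)) ->
  \sum_(p <- s) b p.1 p.2 = \sum_(p <- t) b p.1 p.2.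
Proof.
move=> st b linb Gb; apply/eqP; rewrite -subr_eq0; apply/eqP.
have sumD b' : (forall t, linear (b'^~ t)) ->
    \sum_(p <- s ++ [seq (- p.1, p.2) | p <- t]) b' p.1 p.2
    = \sum_(p <- s) b' p.1 p.2 - \sum_(p <- t) b' p.1 p.2.
  move=> linb'; rewrite big_cat big_map -sumrN; congr (_ + _).
  by apply: eq_bigr => p _; rewrite (linN (linb' _)).
rewrite -sumD //; apply: (tensor_sum_eq0 (G := G)) linb Gb => f linf g Gg.
rewrite (sumD (fun a t => f a *: g t)) ?st ?subrr // => t0 c x y.
by rewrite linf scalerDl scalerA.
Qed.

End TensorSums.

End Separation.

Section MultilinearMaps.
Variables (k : fieldType) (H : algType k).

Lemma linear_mulr (F : H -> H) c : linear F -> linear (fun x => F x * c).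
Proof. by move=> linF a x y; rewrite linF mulrDl scalerAl. Qed.

Lemma linear_mull (F : H -> H) c : linear F -> linear (fun x => c * F x).
Proof. by move=> linF a x y; rewrite linF mulrDr scalerAr. Qed.

Definition is_bilinear (W : lmodType k) (b : H -> H -> W) : Prop :=
  (forall y, linear (b^~ y)) /\ (forall x, linear (b x)).

Definition is_trilinear (W : lmodType k) (b : H -> H -> H -> W) : Prop :=
  [/\ forall y z, linear (fun x => b x y z), forall x z, linear (fun y => b x y z)
    & forall x y, linear (b x y)].

Lemma teq2_bilinear (W : lmodType k) (s t : seq (H * H)) : teq2 s t ->
  forall b : H -> H -> W, is_bilinear b ->
  \sum_(p <- s) b p.1 p.2 = \sum_(p <- t) b p.1 p.2.
Proof.
move=> st b [bl br].
apply: (tensor_sum_eq (G := fun g => linear g)) bl br => f linf g ling.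
apply: eq_by_linear_forms => phi linphi.
rewrite !(lin_sum (scalar_linear linphi)).
under eq_bigr do rewrite (linZ (scalar_linear linphi)).
under [RHS]eq_bigr do rewrite (linZ (scalar_linear linphi)).
have linphig : lin_form (fun y => phi (g y)) by move=> a x y; rewrite ling linphi.
exact: (st f (fun y => phi (g y)) linf linphig).
Qed.

Lemma teq3_trilinear (W : lmodType k) (s t : seq (H * H * H)) : teq3 s t ->
  forall b : H -> H -> H -> W, is_trilinear b ->
  \sum_(p <- s) b p.1.1 p.1.2 p.2 = \sum_(p <- t) b p.1.1 p.1.2 p.2.
Proof.
move=> st b [b1 b2 b3].
pose split3 (r : seq (H * H * H)) := [seq (p.1.1, (p.1.2, p.2)) | p <- r].
have E r (c : H -> H * H -> W) :
    \sum_(p <- split3 r) c p.1 p.2 = \sum_(p <- r) c p.1.1 (p.1.2, p.2).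
  by rewrite big_map.
rewrite -!(E _ (fun x q => b x q.1 q.2)).
apply: (@tensor_sum_eq _ _ _ _ (fun g => is_bilinear (fun y z => g (y, z))) _ _ _
  (fun x q => b x q.1 q.2)).
- move=> f linf g [g1 g2]; rewrite !(E _ (fun x q => f x *: g q)).
  (* pull the scalar f x into the third tensor factor *)
  pose twist (r : seq (H * H * H)) := [seq (p.1.2, f p.1.1 *: p.2) | p <- r].
  have tw : teq2 (twist s) (twist t).
    move=> phi psi linphi linpsi; rewrite /tev2 !big_map.
    have := st f phi psi linf linphi linpsi; rewrite /tev3 => E3.
    under eq_bigr do rewrite (linZ (scalar_linear linpsi)) /GRing.scale /= mulrCA mulrA.
    by under [RHS]eq_bigr do rewrite (linZ (scalar_linear linpsi)) /GRing.scale /= mulrCA mulrA.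
  have := teq2_bilinear tw (conj g1 g2); rewrite !big_map.
  by under eq_bigr do rewrite (linZ (g2 _)); under [X in _ = X -> _]eq_bigr do rewrite (linZ (g2 _)).
- by move=> q; exact: b1.
- by move=> x; split=> [z|y]; [exact: b2 | exact: b3].
Qed.

End MultilinearMaps.

Section Antipode.
Variables (k : fieldType) (H : algType k) (HS : hopf_structure H).
Local Notation D := (Delta HS).
Local Notation S := (antipode HS).
Local Notation e := (eps HS).

(* Convolution in Hom(H (x) H, H) for the tensor product coalgebra H (x) H;
   its unit is counit2. *)
Definition conv (F G : H -> H -> H) (a b : H) : H :=
  \sum_(p <- D a) \sum_(q <- D b) F p.1 q.1 * G p.2 q.2.

Definition counit2 (u v : H) : H := (e u * e v) *: 1.

Lemma conv_counit2_r X a b : is_bilinear X -> conv X counit2 a b = X a b.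
Proof.
move=> [X1 X2]; rewrite /conv /counit2.
under eq_bigr do under eq_bigr do rewrite -scalerAr mulr1 -scalerA.
under eq_bigr => p _.
  rewrite -scaler_sumr; under eq_bigr do rewrite -(linZ (X2 _)).
  rewrite -(lin_sum (X2 _)) counit_r; over.
under eq_bigr do rewrite -(linZ (X1 _)).
by rewrite -(lin_sum (X1 _)) counit_r.
Qed.

Lemma conv_counit2_l X a b : is_bilinear X -> conv counit2 X a b = X a b.
Proof.
move=> [X1 X2]; rewrite /conv /counit2.
under eq_bigr do under eq_bigr do rewrite -scalerAl mul1r -scalerA.
under eq_bigr => p _.
  rewrite -scaler_sumr; under eq_bigr do rewrite -(linZ (X2 _)).
  rewrite -(lin_sum (X2 _)) counit_l; over.
under eq_bigr do rewrite -(linZ (X1 _)).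
by rewrite -(lin_sum (X1 _)) counit_l.
Qed.

Lemma coassoc_sum (W : lmodType k) h (b : H -> H -> H -> W) : is_trilinear b ->
  \sum_(p <- D h) \sum_(q <- D p.1) b q.1 q.2 p.2
  = \sum_(p <- D h) \sum_(q <- D p.2) b p.1 q.1 q.2.
Proof.
by move=> trib; have := teq3_trilinear (Delta_coassoc HS h) trib; rewrite !big_allpairs_dep.
Qed.

Lemma conv_assoc F G K a b : is_bilinear F -> is_bilinear G -> is_bilinear K ->
  conv (conv F G) K a b = conv F (conv G K) a b.
Proof.
move=> [F1 F2] [G1 G2] [K1 K2].
pose T x1 x2 x3 y1 y2 y3 := F x1 y1 * G x2 y2 * K x3 y3.
have triT x1 x2 x3 : is_trilinear (T x1 x2 x3).
  rewrite /T; split=> y z.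
  - exact: (linear_mulr _ (linear_mulr _ (F2 x1))).
  - exact: (linear_mulr _ (linear_mull _ (G2 x2))).
  - exact: (linear_mull _ (K2 x3)).
pose Tl x1 x2 x3 := \sum_(q <- D b) \sum_(q' <- D q.1) T x1 x2 x3 q'.1 q'.2 q.2.
pose Tr x1 x2 x3 := \sum_(q <- D b) \sum_(q' <- D q.2) T x1 x2 x3 q.1 q'.1 q'.2.
have triTl : is_trilinear Tl.
  rewrite /Tl /T; split=> y z; do 2![apply: linear_sum_fun => ?].
  - exact: (linear_mulr _ (linear_mulr _ (F1 _))).
  - exact: (linear_mulr _ (linear_mull _ (G1 _))).
  - exact: (linear_mull _ (K1 _)).
have -> : conv (conv F G) K a b = \sum_(p <- D a) \sum_(p' <- D p.1) Tl p'.1 p'.2 p.2.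
  apply: eq_bigr => p _; under eq_bigr do rewrite mulr_suml.
  rewrite exchange_big; apply: eq_bigr => p' _; apply: eq_bigr => q _.
  by rewrite mulr_suml.
have -> : conv F (conv G K) a b = \sum_(p <- D a) \sum_(p' <- D p.2) Tr p.1 p'.1 p'.2.
  apply: eq_bigr => p _; under eq_bigr do rewrite mulr_sumr.
  rewrite exchange_big; apply: eq_bigr => p' _; apply: eq_bigr => q _.
  by rewrite mulr_sumr; apply: eq_bigr => q' _; rewrite mulrA.
rewrite coassoc_sum //; apply: eq_bigr => p _; apply: eq_bigr => p' _.
exact: coassoc_sum.
Qed.

Lemma bilinear_mul : is_bilinear (fun u v : H => u * v).
Proof. by split=> w a x y; [rewrite mulrDl scalerAl | rewrite mulrDr scalerAr]. Qed.

Lemma bilinear_antipode_mul : is_bilinear (fun u v : H => S u * v).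
Proof.
split=> w; first by apply: linear_mulr; exact: antipode_lin.
by move=> a x y; rewrite mulrDr scalerAr.
Qed.

Lemma antipode1 : S 1 = 1.
Proof.
have := antipode_l HS 1; rewrite eps_one scale1r.
by rewrite (teq2_bilinear (Delta_one HS) bilinear_antipode_mul) big_seq1 mulr1.
Qed.

(* S o m and m o (S (x) S) o flip are a left and a right convolution inverse
   of the multiplication m. *)
Lemma antipodeM a b : S (a * b) = S b * S a.
Proof.
pose R u v := S (u * v); pose L u v := S v * S u; pose M u v : H := u * v.
have bR : is_bilinear R.
  have [mul_l mul_r] := bilinear_mul.
  by split=> w; apply: linear_comp (antipode_lin HS) _; [exact: mul_l | exact: mul_r].
have bL : is_bilinear L.
  by split=> w; [apply: linear_mull | apply: linear_mulr]; exact: antipode_lin.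
have RM u v : conv R M u v = counit2 u v.
  have := teq2_bilinear (Delta_mul HS u v) bilinear_antipode_mul.
  by rewrite antipode_l big_allpairs_dep /= => h; rewrite /conv -h /counit2 eps_mul.
have ML u v : conv M L u v = counit2 u v.
  rewrite /conv /M /L.
  under eq_bigr do under eq_bigr do rewrite mulrA -(mulrA _.1).
  under eq_bigr do rewrite -mulr_suml -mulr_sumr antipode_r -scalerAr -scalerAl mulr1.
  by rewrite -scaler_sumr antipode_r /counit2 scalerA mulrC.
rewrite -[S (a * b)]/(R a b) -(conv_counit2_r a b bR).
have -> : conv R counit2 a b = conv R (conv M L) a b.
  by apply: eq_bigr => p _; apply: eq_bigr => q _; rewrite ML.
rewrite -conv_assoc //; last exact: bilinear_mul.
have -> : conv (conv R M) L a b = conv counit2 L a b.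
  by apply: eq_bigr => p _; apply: eq_bigr => q _; rewrite RM.
by rewrite conv_counit2_l.
Qed.

End Antipode.

Section Subalgebras.
Variables (k : fieldType) (H : algType k).
Implicit Types (P Q L : H -> Prop) (g : seq H).

Lemma gen_alg_subalgebra P : is_subalgebra (gen_alg P).
Proof.
split.
- by move=> Q [].
- by move=> a b ha hb Q hQ PQ; have [_ + _ _] := hQ; apply; [apply: ha | apply: hb].
- by move=> c a ha Q hQ PQ; have [_ _ + _] := hQ; apply; apply: ha.
- by move=> a b ha hb Q hQ PQ; have [_ _ _ +] := hQ; apply; [apply: ha | apply: hb].
Qed.

Lemma gen_alg_incl P y : P y -> gen_alg P y.
Proof. by move=> Py Q _; apply. Qed.

Lemma gen_alg_sub P Q :
  (forall y, P y -> gen_alg Q y) -> forall h, gen_alg P h -> gen_alg Q h.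
Proof. by move=> PQ h; apply; [apply: gen_alg_subalgebra|]. Qed.

Lemma gen_alg_adjoin_sub g1 g2 x h : {subset g1 <= g2} ->
  gen_alg (fun y => y \in g1 \/ y = x) h -> gen_alg (fun y => y \in g2 \/ y = x) h.
Proof.
by move=> g12; apply: gen_alg_sub => y [/g12 yg2|->]; apply: gen_alg_incl; [left|right].
Qed.

Lemma gen_alg_adjoin_finite (K : H -> Prop) x (u : seq H) :
  (forall h, gen_alg (fun y => K y \/ y = x) h) ->
  exists g, (forall y, y \in g -> K y) /\
    forall h, h \in u -> gen_alg (fun y => y \in g \/ y = x) h.
Proof.
move=> genH.
pose reach h := exists g, (forall y, y \in g -> K y) /\
  gen_alg (fun y => y \in g \/ y = x) h.
have reach2 a b : reach a -> reach b -> exists g, (forall y, y \in g -> K y) /\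
    gen_alg (fun y => y \in g \/ y = x) a /\ gen_alg (fun y => y \in g \/ y = x) b.
  move=> [g1 [g1K ha]] [g2 [g2K hb]]; exists (g1 ++ g2); split.
    by move=> y; rewrite mem_cat => /orP[/g1K|/g2K].
  by split; [move: ha | move: hb]; apply: gen_alg_adjoin_sub => y yg;
    rewrite mem_cat yg ?orbT.
have reachH h : reach h.
  apply: (genH h reach).
    split.
    - by exists [::]; split=> // Q [].
    - move=> a b /reach2 /[apply] [[g [gK [ha hb]]]]; exists g; split=> //.
      by have [_ + _ _] := gen_alg_subalgebra (fun y => y \in g \/ y = x); apply.
    - move=> c a [g [gK ha]]; exists g; split=> //.
      by have [_ _ + _] := gen_alg_subalgebra (fun y => y \in g \/ y = x); apply.
    - move=> a b /reach2 /[apply] [[g [gK [ha hb]]]]; exists g; split=> //.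
      by have [_ _ _ +] := gen_alg_subalgebra (fun y => y \in g \/ y = x); apply.
  move=> y [Ky|->]; last by exists [::]; split=> //; apply: gen_alg_incl; right.
  exists [:: y]; split; first by move=> z; rewrite inE => /eqP ->.
  by apply: gen_alg_incl; left; rewrite inE.
elim: u => [|h u [g [gK gu]]]; first by exists [::].
have [g1 [g1K hg1]] := reachH h.
exists (g1 ++ g); split; first by move=> y; rewrite mem_cat => /orP[/g1K|/gK].
move=> z; rewrite inE => /orP[/eqP -> {z} | /gu]; [move: hg1 | ];
  by apply: gen_alg_adjoin_sub => y yg; rewrite mem_cat yg ?orbT.
Qed.

Lemma fin_gen_adjoin L x : fin_gen L -> fin_gen (gen_alg (fun y => L y \/ y = x)).
Proof.
move=> [g Lg]; exists (x :: g) => h; split; apply: gen_alg_sub => y.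
- move=> [Ly|->]; last by apply: gen_alg_incl; rewrite inE eqxx.
  move: ((Lg y).1 Ly); apply: gen_alg_sub => z zg.
  by apply: gen_alg_incl; rewrite inE zg orbT.
- rewrite inE => /orP[/eqP ->|yg]; apply: gen_alg_incl; [by right | left].
  by apply/(Lg y); apply: gen_alg_incl.
Qed.

End Subalgebras.

Section HopfSubalgebras.
Variables (k : fieldType) (H : algType k) (HS : hopf_structure H).
Local Notation D := (Delta HS).
Local Notation S := (antipode HS).
Implicit Types (P L : H -> Prop).

Definition coproduct_in L h : Prop :=
  exists t : seq (H * H), (forall p, p \in t -> L p.1 /\ L p.2) /\ teq2 (D h) t.

Lemma coproduct_in_sub L L' h : (forall y, L y -> L' y) ->
  coproduct_in L h -> coproduct_in L' h.
Proof.
by move=> LL' [t [tL et]]; exists t; split=> // p /tL [/LL' ? /LL' ?].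
Qed.

Lemma scalar_tev2_Delta f g : lin_form f -> lin_form g ->
  scalar (fun h => tev2 f g (D h)).
Proof.
move=> linf ling c a b; rewrite (Delta_lin HS c a b linf ling) /tev2 big_cat big_map /=.
congr (_ + _); rewrite mulr_sumr; apply: eq_bigr => p _.
by rewrite (linZ (scalar_linear linf)) mulrA.
Qed.

Lemma teq2_mul (s1 t1 s2 t2 : seq (H * H)) : teq2 s1 t1 -> teq2 s2 t2 ->
  teq2 [seq (p.1 * q.1, p.2 * q.2) | p <- s1, q <- s2]
       [seq (p.1 * q.1, p.2 * q.2) | p <- t1, q <- t2].
Proof.
move=> e1 e2 f g linf ling; rewrite /tev2 !big_allpairs_dep /=.
have linfr c : lin_form (fun y => f (y * c)).
  by move=> a y z; rewrite mulrDl -scalerAl linf.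
have linfl c : lin_form (fun y => f (c * y)).
  by move=> a y z; rewrite mulrDr -scalerAr linf.
have lingr c : lin_form (fun y => g (y * c)).
  by move=> a y z; rewrite mulrDl -scalerAl ling.
have lingl c : lin_form (fun y => g (c * y)).
  by move=> a y z; rewrite mulrDr -scalerAr ling.
rewrite (eq_bigr (fun p => \sum_(q <- t2) f (p.1 * q.1) * g (p.2 * q.2))); last first.
  by move=> p _; exact: (e2 _ _ (linfl p.1) (lingl p.2)).
rewrite exchange_big [RHS]exchange_big; apply: eq_bigr => q _.
exact: (e1 _ _ (linfr q.1) (lingr q.2)).
Qed.

Lemma coproduct_in_subalgebra L : is_subalgebra L -> is_subalgebra (coproduct_in L).
Proof.
move=> [L1 LD LZ LM]; split.
- by exists [:: (1, 1)]; split; [move=> p; rewrite inE => /eqP -> | exact: Delta_one].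
- move=> a b [t1 [t1L e1]] [t2 [t2L e2]]; exists (t1 ++ t2); split.
    by move=> p; rewrite mem_cat => /orP[/t1L|/t2L].
  move=> f g linf ling.
  rewrite (linD (scalar_linear (scalar_tev2_Delta linf ling))) /=.
  by rewrite e1 // e2 // /tev2 big_cat.
- move=> c a [t [tL et]]; exists [seq (c *: p.1, p.2) | p <- t]; split.
    by move=> _ /mapP [p /tL [L1p L2p] ->]; split=> //; apply: LZ.
  move=> f g linf ling.
  rewrite (linZ (scalar_linear (scalar_tev2_Delta linf ling))) /= et //.
  rewrite /tev2 big_map /GRing.scale /= mulr_sumr.
  by apply: eq_bigr => p _ /=; rewrite (linZ (scalar_linear linf)) mulrA.
- move=> a b [t1 [t1L e1]] [t2 [t2L e2]].
  exists [seq (p.1 * q.1, p.2 * q.2) | p <- t1, q <- t2]; split.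
    move=> _ /allpairsPdep [p [q [/t1L [L1p L2p] /t2L [L1q L2q] ->]]].
    by split; apply: LM.
  move=> f g linf ling; rewrite (Delta_mul HS a b linf ling).
  exact: teq2_mul.
Qed.

Lemma antipode_preimage_subalgebra L : is_subalgebra L -> is_subalgebra (fun h => L (S h)).
Proof.
move=> [L1 LD LZ LM]; split=> [|a b La Lb|c a La|a b La Lb].
- by rewrite antipode1.
- by rewrite (linD (antipode_lin HS)); apply: LD.
- by rewrite (linZ (antipode_lin HS)); apply: LZ.
- by rewrite antipodeM; apply: LM.
Qed.

Lemma hopf_subalgebra_gen P :
  (forall y, P y -> coproduct_in (gen_alg P) y) ->
  (forall y, P y -> gen_alg P (S y)) ->
  hopf_subalgebra HS (gen_alg P).
Proof.
move=> PD PS; split; first exact: gen_alg_subalgebra.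
- move=> h /(_ (coproduct_in (gen_alg P))); apply=> //.
  exact/coproduct_in_subalgebra/gen_alg_subalgebra.
- move=> h /(_ (fun h => gen_alg P (S h))); apply=> //.
  exact/antipode_preimage_subalgebra/gen_alg_subalgebra.
Qed.

End HopfSubalgebras.

Theorem proposition3p9 (k : closedFieldType) (k_char0 : [pchar k] =i pred0)
  (H : algType k) (HS : hopf_structure H) (K : H -> Prop) (x : H) :
  hopf_subalgebra HS K -> locally_affine HS K ->
  (forall h : H, gen_alg (fun y => K y \/ y = x) h) ->
  locally_affine HS (fun _ => True).
Proof.
move=> _ laK genH s _.
pose u := s ++ antipode HS x :: flatten [seq [:: p.1; p.2] | p <- Delta HS x].
have [g [gK gu]] := gen_alg_adjoin_finite u genH.
have [L' [[_ DeltaL' SL'] _ gL' fgL']] := laK g gK.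
pose L := gen_alg (fun y => L' y \/ y = x).
have uL h : h \in u -> L h.
  by move=> /gu; apply: gen_alg_sub => y [/gL' L'y | ->]; apply: gen_alg_incl;
    [left | right].
have L'L y : L' y -> L y by move=> L'y; apply: gen_alg_incl; left.
have DxL p : p \in Delta HS x -> L p.1 /\ L p.2.
  move=> pD; split; apply: uL; rewrite mem_cat inE; apply/or3P/Or33;
    by apply/flatten_mapP; exists p; rewrite // !inE eqxx ?orbT.
exists L; split=> //; last exact: fin_gen_adjoin fgL'.
- apply: hopf_subalgebra_gen => y [L'y | ->].
  + exact: coproduct_in_sub L'L (DeltaL' y L'y).
  + by exists (Delta HS x); split.
  + exact: L'L (SL' _ L'y).
  + by apply: uL; rewrite mem_cat inE eqxx orbT.
- by move=> y ys; apply: uL; rewrite mem_cat ys.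
Qed.
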